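(* Let $G$ be a finite directed multigraph and let $c:\mathcal M_G\to\mathbb R$ be an additive map such that $c(\mathcal C)>-|\mathcal C|$ for every simple directed cycle $\mathcal C$ of $G$. Then $c$ extends to an additive map $c:\mathbb Z^{E(G)}\to\mathbb R$ with $c(e)>-1$ for every $e\in E(G)$.
   Context: Elements of $\mathbb Z^{E(G)}$ are formal sums $\sum_{e\in E(G)}m_e\,e$. A simple directed cycle $\mathcal C$ is identified with the formal sum $\sum_{e\in\mathcal C}e$, and $|\mathcal C|$ is its number of edges. $\mathcal M_G\subseteq\mathbb Z^{E(G)}$ is the $\mathbb Z$-submodule generated by all simple directed cycles of $G$. *)

From HB Require Import structures.
From mathcomp Require Import all_boot all_order all_algebra.
Set Implicit Arguments. Unset Strict Implicit. Unset Printing Implicit Defensive.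
Import Order.TTheory GRing.Theory Num.Theory.
Local Open Scope ring_scope.

(* A finite directed multigraph: finite vertex type V, finite edge type E,
   with source and target maps (parallel edges and loops allowed). *)

(* A simple directed cycle, given as the nonempty list of its edges
   [e_1; ...; e_k] in cyclic order: tgt e_i = src e_(i+1) (indices mod k),
   and the vertices src e_1, ..., src e_k are pairwise distinct
   (hence so are the edges). *)
Definition simple_cycle (V E : finType) (src tgt : E -> V) (s : seq E) : bool :=
  [&& s != [::], path.cycle (fun e f => tgt e == src f) s & uniq (map src s)].

Definition cycle_vec (E : finType) (s : seq E) : {ffun E -> int} :=
  [ffun e => ((e \in s) : nat)%:Z].

(* Membership in M_G: the Z-submodule of Z^{E(G)} generated by the simple
   directed cycles, i.e. finite Z-linear combinations of them. *)
Definition in_MG (V E : finType) (src tgt : E -> V) (x : {ffun E -> int}) : Prop :=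
  exists l : seq (int * seq E),
    all (fun p => simple_cycle src tgt p.2) l /\
    x = \sum_(p <- l) (cycle_vec p.2 *~ p.1).

From HB Require Import structures.
From mathcomp Require Import all_boot all_order all_algebra.
From mathcomp Require Import lra.
Import Order.TTheory GRing.Theory Num.Theory.
Set Implicit Arguments. Unset Strict Implicit. Unset Printing Implicit Defensive.
Local Open Scope ring_scope.

(* Since there are finitely many simple cycles, the strict inequalities hold with
   a uniform margin: c(C) >= (eps - 1)|C| for some eps > 0.  Then
   g = c + (1 - eps) sum_e x_e is additive on M_G and nonnegative on simple
   cycles, hence on every closed walk, as closed walks decompose into simple
   cycles.  Such a g is a sum of nonnegative edge weights along cycles: in each
   strong component fix a root r, a return walk Q_v from v to r, and a walk P_v
   from r to v minimising g(P_v Q_v) (cutting loops never increases the cost, so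
   walks of length at most |V| suffice); the reduced cost
   g(P_(src e) e Q_(tgt e)) - g(P_(tgt e) Q_(tgt e)) of an edge is nonnegative by
   minimality and telescopes to g(C) around a cycle C.  Subtracting 1 - eps from
   these weights gives w > -1. *)

Lemma seq_argmin (T : eqType) (d : Order.disp_t) (R : orderType d) (f : T -> R)
    (s : seq T) x0 :
  x0 \in s -> exists2 m, m \in s & forall y, y \in s -> (f m <= f y)%O.
Proof.
elim: s x0 => [|a s IH] x0 // _; case: s IH => [|b s] IH.
  by exists a => [|y]; rewrite ?mem_head // inE => /eqP->.
have [m ms m_min] := IH b (mem_head _ _).
have [fam|fma] := leP (f a) (f m).
  exists a => [|y]; first exact: mem_head.
  by rewrite in_cons => /predU1P[->|/m_min]; [|exact: le_trans].
exists m => [|y]; first by rewrite in_cons ms orbT.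
by rewrite in_cons => /predU1P[->|/m_min]; [exact: ltW|].
Qed.

Fixpoint bounded_seqs (T : finType) (n : nat) : seq (seq T) :=
  if n is n'.+1 then [::] :: [seq x :: s | x <- enum T, s <- bounded_seqs T n']
  else [:: [::]].

Lemma mem_bounded_seqs (T : finType) n (s : seq T) :
  (size s <= n)%N -> s \in bounded_seqs T n.
Proof.
elim: n s => [|n IH] [|x s] //=; rewrite ?mem_head // ltnS => /IH s_n.
by rewrite in_cons; apply/orP; right; apply: allpairs_f; rewrite ?mem_enum.
Qed.

Section Graph.
Variables (V E : finType) (src tgt : E -> V).

Fixpoint walk (x : V) (s : seq E) (y : V) : bool :=
  if s is e :: s' then (src e == x) && walk (tgt e) s' y else x == y.

Lemma walk_cat x s1 s2 z :
  walk x (s1 ++ s2) z <-> exists y, walk x s1 y /\ walk y s2 z.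
Proof.
elim: s1 x => [|e s1 IH] x /=.
  by split=> [W|[y [/eqP-> //]]]; exists x.
split=> [/andP[-> /IH[y [W1 W2]]]|[y [/andP[-> W1] W2]]]; first by exists y.
by apply/IH; exists y.
Qed.

Lemma walk_split_loop x s y : walk x s y -> ~~ uniq (map src s) ->
  exists s1 s2 z, [/\ walk x s1 y, walk z s2 z, perm_eq s (s1 ++ s2),
                      s1 != [::] & s2 != [::]].
Proof.
elim: s x => [|e s IH] x //= /andP[/eqP<- W].
rewrite negb_and negbK => /orP[/mapP[f fs srcf] | /(IH _ W)[s1 [s2 [z]]]].
  case/splitPr: fs W => p1 p2 /walk_cat[z [W1 /= /andP[/eqP srcfz W2]]].
  exists (f :: p2), (e :: p1), (src e).
  rewrite -srcfz -srcf in W1.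
  by rewrite /= -srcf W1 W2 !eqxx -cat_cons perm_catC.
case=> W1 W2 s_perm s1n0 s2n0; exists (e :: s1), s2, z.
by rewrite /= eqxx W1 W2 perm_cons.
Qed.

Lemma closed_walk_sum_tgt (M : nmodType) (F : V -> M) x s : walk x s x ->
  \sum_(e <- s) F (tgt e) = \sum_(e <- s) F (src e).
Proof.
suff walk_vertices y t : walk y t x -> map src t ++ [:: x] = y :: map tgt t.
  move=> /walk_vertices vs; rewrite -(big_map tgt predT F) -(big_map src predT F).
  by apply/perm_big; rewrite -(perm_cons x) -vs perm_catC.
by elim: t y => [|e t IH] y /=; [move/eqP-> | case/andP=> /eqP-> /IH->].
Qed.

Lemma path_rcons_walk e s f :
  path (fun e f => tgt e == src f) e (rcons s f) = walk (tgt e) s (src f).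
Proof. by elim: s e => [|g s IH] e /=; rewrite ?andbT // IH eq_sym. Qed.

Lemma simple_cycle_closed s : simple_cycle src tgt s -> exists x, walk x s x.
Proof.
case: s => [|e s] /and3P[// _ cyc _]; exists (src e).
by rewrite /= eqxx -path_rcons_walk.
Qed.

Lemma closed_walk_simple x s : walk x s x -> s != [::] -> uniq (map src s) ->
  simple_cycle src tgt s.
Proof.
case: s => [|e s] //= /andP[/eqP srce W] _ us.
by rewrite /simple_cycle /= us andbT /path.cycle path_rcons_walk srce.
Qed.

Lemma simple_cycle_uniq s : simple_cycle src tgt s -> uniq s.
Proof. by case/and3P=> _ _ /map_uniq. Qed.

Lemma uniq_size_card (l : seq V) : uniq l -> (size l <= #|V|)%N.
Proof. by move/card_uniqP <-; apply: max_card. Qed.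

Lemma simple_cycle_size s : simple_cycle src tgt s -> (size s <= #|V|)%N.
Proof. by case/and3P=> _ _ /uniq_size_card; rewrite size_map. Qed.

Definition edge_count (s : seq E) : {ffun E -> int} :=
  [ffun e => (count_mem e s)%:Z].

Lemma edge_count0 : edge_count [::] = 0.
Proof. by apply/ffunP => e; rewrite !ffunE. Qed.

Lemma edge_count_cat s1 s2 : edge_count (s1 ++ s2) = edge_count s1 + edge_count s2.
Proof. by apply/ffunP => e; rewrite !ffunE count_cat PoszD. Qed.

Lemma edge_count_perm s1 s2 : perm_eq s1 s2 -> edge_count s1 = edge_count s2.
Proof. by move/permP=> count12; apply/ffunP => e; rewrite !ffunE count12. Qed.

Lemma edge_count_uniq s : uniq s -> edge_count s = cycle_vec s.
Proof. by move=> us; apply/ffunP => e; rewrite !ffunE count_uniq_mem. Qed.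

Lemma sum_edge_count1 s : \sum_(e <- s) edge_count [:: e] = edge_count s.
Proof.
elim: s => [|e s IH]; first by rewrite big_nil edge_count0.
by rewrite big_cons IH -edge_count_cat.
Qed.

Lemma closed_walk_cycles x s : walk x s x ->
  exists2 L, all (simple_cycle src tgt) L & edge_count s = \sum_(C <- L) cycle_vec C.
Proof.
have [n] := ubnP (size s); elim: n x s => // n IH x s /ltnSE size_s W.
have [us | /(walk_split_loop W)[s1 [s2 [z [W1 W2 s_perm s1n0 s2n0]]]]] :=
  boolP (uniq (map src s)).
  have [->|sn0] := eqVneq s [::]; first by exists [::]; rewrite ?big_nil ?edge_count0.
  exists [:: s]; first by rewrite /= (closed_walk_simple W sn0 us).
  by rewrite big_seq1 edge_count_uniq // (map_uniq us).
have size12 := perm_size s_perm; rewrite size_cat in size12.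
have [|L1 L1s EL1] := IH _ s1 _ W1.
  by apply: leq_trans size_s; rewrite size12 -{1}[size s1]addn0 ltn_add2l lt0n size_eq0.
have [|L2 L2s EL2] := IH _ s2 _ W2.
  by apply: leq_trans size_s; rewrite size12 -{1}[size s2]add0n ltn_add2r lt0n size_eq0.
exists (L1 ++ L2); first by rewrite all_cat L1s L2s.
by rewrite big_cat -EL1 -EL2 (edge_count_perm s_perm) edge_count_cat.
Qed.

Local Notation MG := (in_MG src tgt).

Lemma in_MG0 : MG 0.
Proof. by exists [::]; rewrite big_nil. Qed.

Lemma in_MGD x y : MG x -> MG y -> MG (x + y).
Proof.
move=> [l1 [l1s ->]] [l2 [l2s ->]]; exists (l1 ++ l2).
by rewrite all_cat l1s l2s big_cat.
Qed.

Lemma in_MGMz x n : MG x -> MG (x *~ n).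
Proof.
move=> [l [ls ->]]; exists [seq (p.1 * n, p.2) | p <- l]; rewrite all_map.
by split=> //; rewrite big_map mulrz_suml; apply: eq_bigr => p _; rewrite mulrzA.
Qed.

Lemma in_MG_cycle s : simple_cycle src tgt s -> MG (cycle_vec s).
Proof. by move=> sc; exists [:: (1, s)]; rewrite /= sc big_seq1 mulr1z. Qed.

Lemma in_MG_sum (I : eqType) (r : seq I) (F : I -> {ffun E -> int}) :
  (forall i, i \in r -> MG (F i)) -> MG (\sum_(i <- r) F i).
Proof.
elim: r => [|i r IH] MGF; first by rewrite big_nil; apply: in_MG0.
rewrite big_cons; apply: in_MGD; first by apply: MGF; rewrite mem_head.
by apply: IH => j rj; apply: MGF; rewrite in_cons rj orbT.
Qed.

Lemma in_MG_closed_walk x s : walk x s x -> MG (edge_count s).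
Proof.
case/closed_walk_cycles=> L /allP Ls ->.
by apply: in_MG_sum => C /Ls; apply: in_MG_cycle.
Qed.

Definition additive_on_MG (R : zmodType) (f : {ffun E -> int} -> R) :=
  forall x y, MG x -> MG y -> f (x + y) = f x + f y.

Section AdditiveOnMG.
Variables (R : zmodType) (f : {ffun E -> int} -> R).
Hypothesis f_add : additive_on_MG f.

Lemma additive_on_MG0 : f 0 = 0.
Proof. by apply: (addrI (f 0)); rewrite addr0 -f_add ?addr0 //; apply: in_MG0. Qed.

Lemma additive_on_MGMz x n : MG x -> f (x *~ n) = f x *~ n.
Proof.
move=> MGx; have MGxn m : f (x *+ m) = f x *+ m.
  elim: m => [|m IH]; first by rewrite !mulr0n additive_on_MG0.
  by rewrite !mulrS f_add ?IH // pmulrn; apply: in_MGMz.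
case: n => m; first by rewrite -!pmulrn MGxn.
apply: (addrI (f (x *+ m.+1))); rewrite -f_add ?pmulrn; try exact: in_MGMz.
by rewrite NegzE !mulrNz -!pmulrn MGxn !subrr additive_on_MG0.
Qed.

Lemma additive_on_MG_sum (I : eqType) (r : seq I) (F : I -> {ffun E -> int}) :
  (forall i, i \in r -> MG (F i)) -> f (\sum_(i <- r) F i) = \sum_(i <- r) f (F i).
Proof.
elim: r => [|i r IH] MGF; first by rewrite !big_nil additive_on_MG0.
have MGr j : j \in r -> MG (F j) by move=> rj; apply: MGF; rewrite in_cons rj orbT.
rewrite !big_cons f_add ?IH //; first exact/MGF/mem_head.
exact: in_MG_sum.
Qed.

End AdditiveOnMG.

Lemma additive_on_MG_eq (R : zmodType) (f h : {ffun E -> int} -> R) :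
    additive_on_MG f -> additive_on_MG h ->
    (forall s, simple_cycle src tgt s -> f (cycle_vec s) = h (cycle_vec s)) ->
  forall x, MG x -> f x = h x.
Proof.
move=> f_add h_add fh x [l [/allP ls ->]].
have MGl p : p \in l -> MG (cycle_vec p.2 *~ p.1).
  by move=> lp; apply/in_MGMz/in_MG_cycle/ls.
rewrite !additive_on_MG_sum //; apply: eq_big_seq => p lp.
by rewrite !additive_on_MGMz ?fh ?ls //; apply/in_MG_cycle/ls.
Qed.

Definition adjacent : rel V := fun x y => [exists e, (src e == x) && (tgt e == y)].

Lemma connect_walkP x y : reflect (exists s, walk x s y) (connect adjacent x y).
Proof.
apply: (iffP connectP) => [[p] | [s]].
  elim: p x => [|z p IH] x /=; first by move=> _ ->; exists [::]; rewrite /= eqxx.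
  case/andP=> /existsP[e /andP[srce /eqP tgte]] /IH + y_last.
  by case/(_ y_last)=> s W; exists (e :: s); rewrite /= srce tgte.
elim: s x => [|e s IH] x /=; first by move/eqP->; exists [::].
case/andP=> /eqP<- /IH[p ep ->]; exists (tgt e :: p) => //=.
by rewrite ep andbT; apply/existsP; exists e; rewrite !eqxx.
Qed.

Lemma closed_walk_edge_connect x s e : walk x s x -> e \in s ->
  connect adjacent (tgt e) (src e).
Proof.
move=> W es; case/splitPr: es W => p1 p2 /walk_cat[y [W1 /= /andP[/eqP srce W2]]].
by apply/connect_walkP; exists (p2 ++ p1); apply/walk_cat; exists x; rewrite srce.
Qed.

Definition strongly_connected : rel V :=
  fun x y => connect adjacent x y && connect adjacent y x.

Lemma strongly_connected_sym : connect_sym strongly_connected.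
Proof. by apply: sym_connect_sym => x y; rewrite /strongly_connected andbC. Qed.

Definition scc_root (v : V) : V := fingraph.root strongly_connected v.

Lemma scc_root_connect v :
  connect adjacent (scc_root v) v /\ connect adjacent v (scc_root v).
Proof.
have sub : subrel strongly_connected (connect adjacent) by move=> x y /andP[].
have := connect_root strongly_connected v.
by split; apply: (connect_sub sub); rewrite // strongly_connected_sym.
Qed.

Lemma scc_root_eq x y : connect adjacent x y -> connect adjacent y x ->
  scc_root x = scc_root y.
Proof.
move=> xy yx; apply/(fingraph.rootP strongly_connected_sym)/connect1.
by rewrite /strongly_connected xy yx.
Qed.

Section CycleWeights.
Variables (R : realFieldType) (g : {ffun E -> int} -> R).
Hypothesis g_add : additive_on_MG g.
Hypothesis g_cycle_ge0 : forall s, simple_cycle src tgt s -> 0 <= g (cycle_vec s).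

Lemma closed_walk_ge0 x s : walk x s x -> 0 <= g (edge_count s).
Proof.
case/closed_walk_cycles=> L /allP Ls ->.
rewrite (additive_on_MG_sum g_add) => [|C /Ls /in_MG_cycle //].
by rewrite big_seq; apply: sumr_ge0 => C /Ls /g_cycle_ge0.
Qed.

Lemma shorten_walk x s y Q : walk x s y -> walk y Q x ->
  exists s', [/\ walk x s' y, (size s' <= #|V|)%N &
                 g (edge_count (s' ++ Q)) <= g (edge_count (s ++ Q))].
Proof.
move=> + WQ; have [n] := ubnP (size s); elim: n s => // n IH s /ltnSE size_s W.
have [small|large] := leqP (size s) #|V|; first by exists s.
have /(walk_split_loop W)[s1 [s2 [z [W1 W2 s_perm _ s2n0]]]] : ~~ uniq (map src s).
  by apply: contraTN large => /uniq_size_card; rewrite size_map -leqNgt.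
have size12 := perm_size s_perm; rewrite size_cat in size12.
have [|s' [W' s'_small le_s']] := IH s1 _ W1.
  by apply: leq_trans size_s; rewrite size12 -{1}[size s1]addn0 ltn_add2l lt0n size_eq0.
exists s'; split=> //; apply: (le_trans le_s').
have W1Q : walk x (s1 ++ Q) x by apply/walk_cat; exists y.
have -> : edge_count (s ++ Q) = edge_count (s1 ++ Q) + edge_count s2.
  by rewrite !edge_count_cat (edge_count_perm s_perm) edge_count_cat addrAC.
rewrite g_add ?lerDl; first exact: closed_walk_ge0 W2.
  exact: in_MG_closed_walk W1Q.
exact: in_MG_closed_walk W2.
Qed.

Lemma min_closing_walk x y P0 Q : walk x P0 y -> walk y Q x ->
  exists2 P, walk x P y & forall P', walk x P' y ->
    g (edge_count (P ++ Q)) <= g (edge_count (P' ++ Q)).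
Proof.
move=> WP0 WQ; pose cands := [seq P <- bounded_seqs E #|V| | walk x P y].
have candsP P : walk x P y -> exists2 P1, P1 \in cands &
    g (edge_count (P1 ++ Q)) <= g (edge_count (P ++ Q)).
  case/shorten_walk/(_ WQ)=> P1 [W1 small le1]; exists P1 => //.
  by rewrite mem_filter W1 mem_bounded_seqs.
have [P1 P1c _] := candsP _ WP0.
have [P Pc P_min] := seq_argmin (fun P => g (edge_count (P ++ Q))) P1c.
exists P => [|P' /candsP[P'' /P_min]]; first by move: Pc; rewrite mem_filter => /andP[].
exact: le_trans.
Qed.

Section Potentials.
Variables P Q : V -> seq E.
Hypothesis P_walk : forall v, walk (scc_root v) (P v) v.
Hypothesis Q_walk : forall v, walk v (Q v) (scc_root v).
Hypothesis P_min : forall v P', walk (scc_root v) P' v ->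
  g (edge_count (P v ++ Q v)) <= g (edge_count (P' ++ Q v)).

Definition vertex_loop (v : V) := edge_count (P v ++ Q v).

Definition edge_loop (e : E) := edge_count (P (src e) ++ e :: Q (tgt e)).

(* Edges joining different strong components lie on no cycle: weight [0]. *)
Definition reduced_cost (e : E) : R :=
  if scc_root (src e) == scc_root (tgt e) then
    g (edge_loop e) - g (vertex_loop (tgt e))
  else 0.

Lemma reduced_cost_ge0 e : 0 <= reduced_cost e.
Proof.
rewrite /reduced_cost; case: eqP => // same.
rewrite subr_ge0 /edge_loop -cat1s catA; apply: P_min; apply/walk_cat.
by exists (src e); rewrite -same /= !eqxx.
Qed.

Lemma in_MG_vertex_loop v : MG (vertex_loop v).
Proof.
apply: (@in_MG_closed_walk (scc_root v)); apply/walk_cat.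
by exists v; rewrite P_walk Q_walk.
Qed.

Lemma in_MG_edge_loop e : scc_root (src e) = scc_root (tgt e) -> MG (edge_loop e).
Proof.
move=> same; apply: (@in_MG_closed_walk (scc_root (src e))).
apply/walk_cat; exists (src e); split; first exact: P_walk.
by rewrite /= eqxx same Q_walk.
Qed.

Lemma sum_edge_loop x s : walk x s x ->
  \sum_(e <- s) edge_loop e = \sum_(e <- s) vertex_loop (tgt e) + edge_count s.
Proof.
move=> W; rewrite -sum_edge_count1.
have -> : \sum_(e <- s) edge_loop e = \sum_(e <- s) edge_count (P (src e))
                  + \sum_(e <- s) (edge_count (Q (tgt e)) + edge_count [:: e]).
  rewrite -big_split; apply: eq_bigr => e _.
  by rewrite /edge_loop edge_count_cat -cat1s edge_count_cat [edge_count [:: e] + _]addrC.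
rewrite -[\sum_(e <- s) edge_count (P (src e))](closed_walk_sum_tgt (fun v => edge_count (P v)) W).
rewrite big_split addrA -big_split; congr (_ + _).
by apply: eq_bigr => e _; rewrite /vertex_loop edge_count_cat.
Qed.

Lemma cycle_reduced_cost s : simple_cycle src tgt s ->
  g (cycle_vec s) = \sum_(e <- s) reduced_cost e.
Proof.
move=> sc; have [x W] := simple_cycle_closed sc.
have same e : e \in s -> scc_root (src e) = scc_root (tgt e).
  move=> es; apply: scc_root_eq (closed_walk_edge_connect W es).
  by apply/connect1/existsP; exists e; rewrite !eqxx.
rewrite (eq_big_seq (fun e => g (edge_loop e) - g (vertex_loop (tgt e)))); last first.
  by move=> e /same; rewrite /reduced_cost => ->; rewrite eqxx.
rewrite sumrB -!(additive_on_MG_sum g_add) => [||e /same/in_MG_edge_loop //].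
- rewrite (sum_edge_loop W) edge_count_uniq ?(simple_cycle_uniq sc) // g_add.
  + by rewrite addrC addKr.
  + by apply: in_MG_sum => v _; apply: in_MG_vertex_loop.
  + exact: in_MG_cycle.
- by move=> e _; apply: in_MG_vertex_loop.
Qed.

End Potentials.

Lemma cycle_weights : exists2 u : E -> R, forall e, 0 <= u e &
  forall s, simple_cycle src tgt s -> g (cycle_vec s) = \sum_(e <- s) u e.
Proof.
have PQ v : exists PQ : seq E * seq E, [/\ walk (scc_root v) PQ.1 v,
    walk v PQ.2 (scc_root v) & forall P', walk (scc_root v) P' v ->
    g (edge_count (PQ.1 ++ PQ.2)) <= g (edge_count (P' ++ PQ.2))].
  have [/connect_walkP[P0 WP0] /connect_walkP[Q WQ]] := scc_root_connect v.
  by have [P WP P_min] := min_closing_walk WP0 WQ; exists (P, Q).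
have [{}PQ PQ_spec] := fin_all_exists PQ.
exists (reduced_cost (fun v => (PQ v).1) (fun v => (PQ v).2)) => [e|s].
  by apply: reduced_cost_ge0 => v; case: (PQ_spec v).
by apply: cycle_reduced_cost => v; case: (PQ_spec v).
Qed.

End CycleWeights.

End Graph.

Definition edge_sum (R : pzRingType) (E : finType) (w : E -> R)
    (x : {ffun E -> int}) : R :=
  \sum_e (x e)%:~R * w e.

Lemma edge_sumD (R : pzRingType) (E : finType) (w : E -> R) x y :
  edge_sum w (x + y) = edge_sum w x + edge_sum w y.
Proof. by rewrite -big_split; apply: eq_bigr => e _; rewrite ffunE intrD mulrDl. Qed.

Lemma edge_sum_cycle (R : pzRingType) (E : finType) (w : E -> R) (s : seq E) :
  uniq s -> edge_sum w (cycle_vec s) = \sum_(e <- s) w e.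
Proof.
move=> us; rewrite (big_uniq _ us) big_mkcond; apply: eq_bigr => e _.
by rewrite ffunE; case: (e \in s); rewrite ?mul1r ?mul0r.
Qed.

Lemma sumr_const_seq (R : nmodType) (I : Type) (s : seq I) (x : R) :
  \sum_(i <- s) x = x *+ size s.
Proof. by rewrite big_const_seq count_predT iter_addr_0. Qed.

Lemma cycle_margin (R : realFieldType) (V E : finType) (src tgt : E -> V)
    (c : {ffun E -> int} -> R) :
    (forall s, simple_cycle src tgt s -> - (size s)%:R < c (cycle_vec s)) ->
  exists2 eps : R, 0 < eps & forall s, simple_cycle src tgt s ->
    eps * (size s)%:R <= c (cycle_vec s) + (size s)%:R.
Proof.
move=> c_cyc; pose cycles := [seq s <- bounded_seqs E #|V| | simple_cycle src tgt s].
have cyclesP s : simple_cycle src tgt s -> s \in cycles.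
  by move=> sc; rewrite mem_filter sc mem_bounded_seqs // (simple_cycle_size sc).
have size_gt0 s : simple_cycle src tgt s -> (0 < size s)%N.
  by case/and3P; rewrite lt0n size_eq0.
case cycles_eq: cycles => [|s0 rest].
  by exists 1 => // s /cyclesP; rewrite cycles_eq.
pose f s := (c (cycle_vec s) + (size s)%:R) / (size s)%:R.
have [m mc m_min] := seq_argmin f (mem_head s0 rest); rewrite -cycles_eq in mc m_min.
have m_sc : simple_cycle src tgt m by move: mc; rewrite mem_filter => /andP[].
exists (f m) => [|s sc].
  by rewrite divr_gt0 ?ltr0n ?size_gt0 //; have := c_cyc m m_sc; lra.
by rewrite -ler_pdivlMr ?ltr0n ?size_gt0 //; apply/m_min/cyclesP.
Qed.

Theorem mainTheorem12 (R : realFieldType) (V E : finType) (src tgt : E -> V)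
  (c : {ffun E -> int} -> R)
  (c_add : forall x y, in_MG src tgt x -> in_MG src tgt y -> c (x + y) = c x + c y)
  (c_cyc : forall s, simple_cycle src tgt s -> - (size s)%:R < c (cycle_vec s)) :
  exists w : E -> R,
    (forall e, -1 < w e) /\
    (forall x, in_MG src tgt x -> c x = \sum_(e : E) (x e)%:~R * w e).
Proof.
have [eps eps_gt0 margin] := cycle_margin c_cyc.
pose k := 1 - eps; pose g x := c x + edge_sum (fun=> k) x.
have g_add : additive_on_MG src tgt g.
  by move=> x y MGx MGy; rewrite /g c_add // edge_sumD addrACA.
have g_cycle s : simple_cycle src tgt s -> g (cycle_vec s) = c (cycle_vec s) + k *+ size s.
  by move=> sc; rewrite /g edge_sum_cycle ?(simple_cycle_uniq sc) //= sumr_const_seq.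
have g_ge0 s : simple_cycle src tgt s -> 0 <= g (cycle_vec s).
  by move=> sc; have := margin s sc; rewrite g_cycle // -mulr_natr /k; lra.
have [u u_ge0 u_cycle] := cycle_weights g_add g_ge0.
exists (fun e => u e - k); split=> [e | ].
  by have := u_ge0 e; rewrite /k; lra.
apply: (additive_on_MG_eq (h := edge_sum _) c_add) => [x y _ _ | s sc].
  exact: edge_sumD.
rewrite edge_sum_cycle ?(simple_cycle_uniq sc) // sumrB -u_cycle // g_cycle //.
by rewrite sumr_const_seq addrK.
Qed.
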